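(* Let $\mathbf{G}\in\mathbb{F}_2^{m\times n}$ be a triorthogonal matrix with linearly independent rows, written (after row permutation) as $\mathbf{G}=\begin{bmatrix}\mathbf{G}_1\\ \mathbf{G}_0\end{bmatrix}$, where $\mathbf{G}_1\in\mathbb{F}_2^{k\times n}$ consists of the odd-weight rows and $\mathbf{G}_0$ of the even-weight rows of $\mathbf{G}$. Let $\mathcal{Q}^T=\mathrm{CSS}(\mathcal{C}_1,\mathcal{C}_2)$ be the associated triorthogonal code, where $\mathcal{C}_1$ is the binary code generated by $\mathbf{G}$ and $\mathcal{C}_2$ is the dual of the code generated by $\mathbf{G}_0$. Then $\mathcal{Q}^T$ is CZ-transversal: for all $\bm{\psi},\bm{\phi}\in\mathbb{F}_2^k$, $$\mathbf{CZ}^{\otimes n}\big(|\bm{\psi}\rangle_L\otimes|\bm{\phi}\rangle_L\big)=(-1)^{\bm{\psi}\cdot\bm{\phi}}\,|\bm{\psi}\rangle_L\otimes|\bm{\phi}\rangle_L,$$ where $\mathbf{CZ}^{\otimes n}$ applies a physical controlled-$Z$ gate between qubit $i$ of the first block and qubit $i$ of the second block for every $i=1,\dots,n$; i.e., transversal CZ implements the logical CZ between corresponding logical qubits of the two code blocks.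
   Context: A binary matrix $\mathbf{G}=[G_{ij}]\in\mathbb{F}_2^{m\times n}$ is triorthogonal if $\sum_{i=1}^n G_{ai}G_{bi}=0 \pmod 2$ for all rows $a\neq b$, and $\sum_{i=1}^n G_{ai}G_{bi}G_{ci}=0\pmod 2$ for all distinct rows $a,b,c$. For binary linear codes $\mathcal{C}_1,\mathcal{C}_2\subseteq\mathbb{F}_2^n$ with $\mathcal{C}_2^\perp\subset\mathcal{C}_1$, the CSS code $\mathrm{CSS}(\mathcal{C}_1,\mathcal{C}_2)$ is the span of the logical basis states $|\bm{\psi}\rangle_L=|\mathcal{C}_2^\perp|^{-1/2}\sum_{\mathbf{y}\in\mathcal{C}_2^\perp}|\bm{\psi}\mathbf{A}+\mathbf{y}\rangle$, $\bm{\psi}\in\mathbb{F}_2^k$, where $\mathbf{A}\in\mathbb{F}_2^{k\times n}$ is a full-rank mapping matrix whose rows represent a basis of $\mathcal{C}_1/\mathcal{C}_2^\perp$. For the triorthogonal code $\mathcal{Q}^T$ the mapping matrix is $\mathbf{A}=\mathbf{G}_1$, and $k$ equals the number of rows of $\mathbf{G}_1$. The $\mathbf{CZ}$ gate is $\mathrm{diag}(1,1,1,-1)$. *)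

From HB Require Import structures.
From mathcomp Require Import all_boot all_order all_algebra.
From mathcomp Require Import algC.
Set Implicit Arguments. Unset Strict Implicit. Unset Printing Implicit Defensive.
Import Order.TTheory GRing.Theory Num.Theory.
Local Open Scope ring_scope.

Definition wt n (x : 'rV['F_2]_n) : nat := #|[set i : 'I_n | x 0 i != 0]|.

Definition triorthogonal m n (G : 'M['F_2]_(m, n)) : Prop :=
  (forall a b : 'I_m, a != b -> \sum_(i < n) G a i * G b i = 0) /\
  (forall a b c : 'I_m, a != b -> b != c -> a != c ->
     \sum_(i < n) G a i * G b i * G c i = 0).

Definition code_gen m n (G : 'M['F_2]_(m, n)) : {set 'rV['F_2]_n} :=
  [set x | (x <= G)%MS].

Definition dual n (C : {set 'rV['F_2]_n}) : {set 'rV['F_2]_n} :=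
  [set x | [forall c in C, x *m c^T == 0]].

(* Logical basis state of CSS(C1,C2) with mapping matrix A, as amplitude
   function on computational basis states x in F_2^n:
   |psi>_L = |C2^perp|^{-1/2} sum_{y in C2^perp} |psi A + y>. *)
Definition logical_state k n (C2 : {set 'rV['F_2]_n}) (A : 'M['F_2]_(k, n))
  (psi : 'rV['F_2]_k) (x : 'rV['F_2]_n) : algC :=
  (sqrtC (#|dual C2|%:R : algC))^-1 *
  \sum_(y in dual C2) (if x == psi *m A + y then 1 else 0).

Definition tensor n (f g : 'rV['F_2]_n -> algC) (x y : 'rV['F_2]_n) : algC :=
  f x * g y.

(* Transversal CZ: physical CZ = diag(1,1,1,-1) between qubit i of block 1
   and qubit i of block 2, for every i. *)
Definition CZn n (F : 'rV['F_2]_n -> 'rV['F_2]_n -> algC)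
  (x y : 'rV['F_2]_n) : algC :=
  (\prod_(i < n) (if (x 0 i == 1) && (y 0 i == 1) then -1 else 1)) * F x y.

Definition sgnF2 (b : 'F_2) : algC := if b == 0 then 1 else -1.

From HB Require Import structures.
From mathcomp Require Import all_boot all_order all_algebra.
From mathcomp Require Import algC.
Import Order.TTheory GRing.Theory Num.Theory.
Set Implicit Arguments. Unset Strict Implicit. Unset Printing Implicit Defensive.
Local Open Scope ring_scope.

(* Over F_2 the square of a row is its weight mod 2, so pairwise orthogonality
   of the rows of G = [G1; G0] together with the weight parities gives
   G1 G1^T = 1, G1 G0^T = 0 and G0 G0^T = 0.  Hence the span of G0 lies in
   C2 = G0^perp, so C2^perp lies in C2, and the rows of G1 lie in C2 as well.
   Transversal CZ multiplies |x>|y> by (-1)^(x.y); on the support of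
   |psi>_L |phi>_L we have x = psi G1 + u, y = phi G1 + v with u, v in
   C2^perp, and all cross terms of x.y vanish, leaving psi G1 G1^T phi^T =
   psi.phi. *)

Lemma F2_cases (a : 'F_2) : a = 0 \/ a = 1.
Proof. by case: a => [[|[|//]]] ?; [left | right]; apply: val_inj. Qed.

Lemma natr_F2 (m : nat) : m%:R = (odd m)%:R :> 'F_2.
Proof. by rewrite -(@Fp_nat_mod 2) // modn2. Qed.

Lemma sgnF2D (a b : 'F_2) : sgnF2 (a + b) = sgnF2 a * sgnF2 b.
Proof.
rewrite /sgnF2.
by case: (F2_cases a) => ->; case: (F2_cases b) => ->;
  rewrite ?mulr1 ?mul1r ?mulrNN ?mulr1.
Qed.

Lemma mulmx_trE (R : pzSemiRingType) m n p
    (A : 'M[R]_(m, n)) (B : 'M[R]_(p, n)) a b :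
  (A *m B^T) a b = \sum_(i < n) A a i * B b i.
Proof. by rewrite mxE; apply: eq_bigr => i _; rewrite mxE. Qed.

Lemma dot_self_F2 n (w : 'rV['F_2]_n) : (w *m w^T) 0 0 = (odd (wt w))%:R.
Proof.
rewrite mulmx_trE -natr_F2 /wt -sum1_card natr_sum [RHS]big_mkcond.
apply: eq_bigr => i _; rewrite inE.
by case: (F2_cases (w 0 i)) => ->; rewrite ?mul0r ?mul1r ?eqxx ?oner_eq0.
Qed.

Definition orthogonal_rows m n (G : 'M['F_2]_(m, n)) : Prop :=
  forall a b : 'I_m, a != b -> \sum_(i < n) G a i * G b i = 0.

Definition wt_parities m n (G : 'M['F_2]_(m, n)) : 'rV['F_2]_m :=
  \row_(a < m) (odd (wt (row a G)))%:R.

Lemma gram_orthogonal_rows m n (G : 'M['F_2]_(m, n)) :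
  orthogonal_rows G -> G *m G^T = diag_mx (wt_parities G).
Proof.
move=> orth; apply/matrixP => a b; rewrite mulmx_trE !mxE.
have [<-|ab] := eqVneq a b; last exact: orth.
by rewrite -dot_self_F2 mulmx_trE; apply: eq_bigr => i _; rewrite !mxE.
Qed.

Lemma wt_parities_col_mx k r n (G1 : 'M['F_2]_(k, n)) (G0 : 'M['F_2]_(r, n)) :
  (forall i, odd (wt (row i G1))) -> (forall i, ~~ odd (wt (row i G0))) ->
  wt_parities (col_mx G1 G0) = row_mx (const_mx 1) 0.
Proof.
move=> odd1 even0; apply/rowP => a; rewrite !mxE.
case: split_ordP => i ->; rewrite ?row_mxEl ?row_mxEr !mxE.
  by rewrite rowKu odd1.
by rewrite rowKd (negbTE (even0 i)).
Qed.

Lemma gram_col_mx k r n (G1 : 'M['F_2]_(k, n)) (G0 : 'M['F_2]_(r, n)) :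
  orthogonal_rows (col_mx G1 G0) ->
  (forall i, odd (wt (row i G1))) -> (forall i, ~~ odd (wt (row i G0))) ->
  [/\ G1 *m G1^T = 1%:M, G1 *m G0^T = 0 & G0 *m G0^T = 0].
Proof.
move=> orth odd1 even0; have := gram_orthogonal_rows orth.
rewrite tr_col_mx mul_col_row wt_parities_col_mx // diag_mx_row diag_const_mx.
by rewrite linear0 => /eq_block_mx[].
Qed.

Lemma dual_orthogonal n (C : {set 'rV['F_2]_n}) u c :
  u \in dual C -> c \in C -> u *m c^T = 0.
Proof. by rewrite inE => /forall_inP uC /uC/eqP. Qed.

Lemma dualS n (A B : {set 'rV['F_2]_n}) : A \subset B -> dual B \subset dual A.
Proof.
move=> AB; apply/subsetP => u; rewrite !inE => /forall_inP uB.
by apply/forall_inP => c /(subsetP AB); apply: uB.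
Qed.

Lemma mem_dual_code_gen m n (G : 'M['F_2]_(m, n)) w :
  (w \in dual (code_gen G)) = (w *m G^T == 0).
Proof.
rewrite inE; apply/forall_inP/eqP => [orth | wG c]; last first.
  by rewrite inE => /submxP[a ->]; rewrite trmx_mul mulmxA wG mul0mx.
apply/rowP => i; have iG : row i G \in code_gen G by rewrite inE row_sub.
have /eqP/matrixP/(_ 0 0) := orth _ iG; rewrite !mulmx_trE !mxE => {}orth.
by rewrite -[RHS]orth; apply: eq_bigr => j _; rewrite mxE.
Qed.

Lemma code_gen_sub_dual m p n (G : 'M['F_2]_(m, n)) (H : 'M['F_2]_(p, n)) :
  G *m H^T = 0 -> code_gen G \subset dual (code_gen H).
Proof.
move=> GH; apply/subsetP => x; rewrite inE mem_dual_code_gen => /submxP[a ->].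
by rewrite -mulmxA GH mulmx0.
Qed.

Lemma dot_coset k n (C : {set 'rV['F_2]_n}) (A : 'M['F_2]_(k, n)) p q u v :
  A *m A^T = 1%:M -> code_gen A \subset C -> dual C \subset C ->
  u \in dual C -> v \in dual C -> (p *m A + u) *m (q *m A + v)^T = p *m q^T.
Proof.
move=> AA AC DC uD vD.
have inC s : s *m A \in C by apply: (subsetP AC); rewrite inE submxMl.
have pAv : p *m A *m v^T = 0.
  by rewrite -[LHS]trmxK trmx_mul trmxK (dual_orthogonal vD (inC p)) trmx0.
rewrite linearD /= !mulmxDl !mulmxDr pAv (dual_orthogonal uD (inC q)).
rewrite (dual_orthogonal uD (subsetP DC v vD)) !addr0.
by rewrite trmx_mul mulmxA -[p *m A *m A^T]mulmxA AA mulmx1.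
Qed.

Lemma CZn_sgn n (F : 'rV['F_2]_n -> 'rV['F_2]_n -> algC) x y :
  CZn F x y = sgnF2 ((x *m y^T) 0 0) * F x y.
Proof.
congr (_ * _); rewrite mulmx_trE.
elim/big_rec2: _ => [|i a b _ ->]; first by rewrite /sgnF2 eqxx.
rewrite sgnF2D; congr (_ * _).
by case: (F2_cases (x 0 i)) => ->; case: (F2_cases (y 0 i)) => ->.
Qed.

Lemma logical_state_support k n
    (C2 : {set 'rV['F_2]_n}) (A : 'M['F_2]_(k, n)) p z :
  logical_state C2 A p z != 0 -> exists2 u, u \in dual C2 & z = p *m A + u.
Proof.
have [/exists_inP[u uD /eqP ->] _|none] :=
  boolP [exists u in dual C2, z == p *m A + u]; first by exists u.
case/eqP; rewrite /logical_state big1 ?mulr0 // => u uD.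
by case: eqP => // zE; case/exists_inP: none; exists u => //; apply/eqP.
Qed.

Unset Implicit Arguments.

Theorem theorem1 (k r n : nat)
  (G1 : 'M['F_2]_(k, n)) (G0 : 'M['F_2]_(r, n))
  (Htri : triorthogonal (col_mx G1 G0))
  (Hfree : row_free (col_mx G1 G0))
  (Hodd : forall i : 'I_k, odd (wt (row i G1)))
  (Heven : forall i : 'I_r, ~~ odd (wt (row i G0))) :
  let C2 := dual (code_gen G0) in
  forall (psi phi : 'rV['F_2]_k) (x y : 'rV['F_2]_n),
    CZn (tensor (logical_state C2 G1 psi) (logical_state C2 G1 phi)) x y =
    sgnF2 ((psi *m phi^T) 0 0) *
      tensor (logical_state C2 G1 psi) (logical_state C2 G1 phi) x y.
Proof.
move=> C2 psi phi x y.
have [G11 G10 G00] := gram_col_mx Htri.1 Hodd Heven.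
have G1C2 : code_gen G1 \subset C2 := code_gen_sub_dual G10.
have DC2 : dual C2 \subset C2 := dualS (code_gen_sub_dual G00).
rewrite CZn_sgn /tensor.
have [->|/logical_state_support[u uD ->]] := eqVneq (logical_state C2 G1 psi x) 0.
  by rewrite !mul0r !mulr0.
have [->|/logical_state_support[v vD ->]] := eqVneq (logical_state C2 G1 phi y) 0.
  by rewrite !mulr0.
by rewrite (dot_coset _ _ G11 G1C2 DC2 uD vD).
Qed.
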